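(* Let $\sigma : X^* \to M$ be a monoid choice of generators for a right cancellative monoid $M$. Then the loop problem $L_\sigma(M)$ is deletion-closed: whenever $x, y, w \in \hat{X}^*$ satisfy $w \in L_\sigma(M)$ and $xwy \in L_\sigma(M)$, we have $xy \in L_\sigma(M)$.
   Context: Maps are written on the right. $X^*$ is the free monoid on $X$; a choice of generators is a surjective monoid morphism. Let $\overline{X} = \{\overline{x} : x \in X\}$ be new symbols, $\hat{X} = X \cup \overline{X}$. The loop automaton of $M$ w.r.t. $\sigma$ has vertex set $M$, for each $a \in M$, $x \in X$ an edge $a \to a(x\sigma)$ labelled $x$ and an edge $a(x\sigma) \to a$ labelled $\overline{x}$; the loop problem $L_\sigma(M) \subseteq \hat{X}^*$ is the set of labels of paths from the identity to the identity. *)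

From mathcomp Require Import all_boot.
Set Implicit Arguments. Unset Strict Implicit. Unset Printing Implicit Defensive.

Definition is_monoid (M : Type) (mul : M -> M -> M) (one : M) : Prop :=
  [/\ forall a b c, mul a (mul b c) = mul (mul a b) c,
      forall a, mul one a = a & forall a, mul a one = a].

Definition right_cancellative (M : Type) (mul : M -> M -> M) : Prop :=
  forall a b c, mul b a = mul c a -> b = c.

Definition choice_of_generators (X M : Type) (mul : M -> M -> M) (one : M)
  (sigma : seq X -> M) : Prop :=
  [/\ sigma [::] = one,
      forall u v, sigma (u ++ v) = mul (sigma u) (sigma v)
    & forall m, exists w, sigma w = m].

(* hat X = X ∪ X̄ : inl x is the letter x, inr x is the letter x̄. *)
Definition hat (X : Type) : Type := (X + X)%type.

Definition loop_edge (X M : Type) (mul : M -> M -> M) (sigma : seq X -> M)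
  (a : M) (l : hat X) (b : M) : Prop :=
  match l with
  | inl x => b = mul a (sigma [:: x])
  | inr x => a = mul b (sigma [:: x])
  end.

Inductive loop_path (X M : Type) (mul : M -> M -> M) (sigma : seq X -> M)
  : M -> seq (hat X) -> M -> Prop :=
| loop_path_nil a : loop_path mul sigma a [::] a
| loop_path_cons a l b w c :
    loop_edge mul sigma a l b -> loop_path mul sigma b w c ->
    loop_path mul sigma a (l :: w) c.

Definition loop_problem (X M : Type) (mul : M -> M -> M) (one : M)
  (sigma : seq X -> M) : seq (hat X) -> Prop :=
  fun w => loop_path mul sigma one w one.

From mathcomp Require Import all_boot.
Set Implicit Arguments. Unset Strict Implicit. Unset Printing Implicit Defensive.

(* Left multiplication by [a] carries the loop at 1 labelled [w] to a loop at
   [a] labelled [w].  Right cancellativity makes the loop automaton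
   deterministic, so in the path for [x w y] the [w]-segment, which starts at
   the vertex [a] reached by [x], must end at [a] again; cutting it out leaves
   a path for [x y]. *)

Section LoopPaths.

Variables (X M : Type) (mul : M -> M -> M) (sigma : seq X -> M).

Local Notation edge := (loop_edge mul sigma).
Local Notation lpath := (loop_path mul sigma).

Lemma loop_path_cat a u b v c :
  lpath a u b -> lpath b v c -> lpath a (u ++ v) c.
Proof.
elim=> {a u b} // a l b u d e _ IH /IH.
exact: loop_path_cons e.
Qed.

Lemma loop_path_catP a u v c :
  lpath a (u ++ v) c -> exists2 b, lpath a u b & lpath b v c.
Proof.
elim: u a => [|l u IH] a p; first by exists a => //; apply: loop_path_nil.
inversion p as [|? ? b ? ? e pb]; subst.
have [d pu pv] := IH b pb.
by exists d => //; apply: loop_path_cons e pu.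
Qed.

Lemma loop_path_lmul (mulA : associative mul) a b w c :
  lpath b w c -> lpath (mul a b) w (mul a c).
Proof.
elim=> {b w c} [b|b l b' w c e _ IH]; first exact: loop_path_nil.
apply: loop_path_cons IH.
by case: l e => s /= ->; rewrite mulA.
Qed.

Hypothesis mul_rcancel : right_cancellative mul.

Lemma loop_edge_det a l b b' : edge a l b -> edge a l b' -> b = b'.
Proof.
case: l => s /=; first by move=> -> ->.
by move=> Eb Eb'; apply: (mul_rcancel (a := sigma [:: s])); rewrite -Eb -Eb'.
Qed.

Lemma loop_path_det a w c c' : lpath a w c -> lpath a w c' -> c = c'.
Proof.
move=> p; elim: p c' => {a w c} [a|a l b w c e _ IH] c' p'.
  by inversion p'.
inversion p' as [|? ? b' ? ? e' pb']; subst.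
by apply: IH; rewrite (loop_edge_det e e').
Qed.

End LoopPaths.

Theorem proposition7p4 (X M : Type) (mul : M -> M -> M) (one : M)
  (sigma : seq X -> M) :
  is_monoid mul one ->
  right_cancellative mul ->
  choice_of_generators mul one sigma ->
  forall x y w : seq (hat X),
    loop_problem mul one sigma w ->
    loop_problem mul one sigma (x ++ w ++ y) ->
    loop_problem mul one sigma (x ++ y).
Proof.
move=> [mulA _ mulr1] rcancel _ x y w w_loop xwy_loop.
have [a px wy_loop] := loop_path_catP xwy_loop.
have [c pw py] := loop_path_catP wy_loop.
have aw : loop_path mul sigma a w a.
  by have := loop_path_lmul mulA a w_loop; rewrite mulr1.
rewrite (loop_path_det rcancel pw aw) in py.
exact: loop_path_cat px py.
Qed.
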